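(* Let $\theta>1$, $r\in(\theta^{-1},\theta^{-1/2}]$ and $\beta=\frac{1-r^2\theta}{r\theta}\max\big(\frac1{1-r},\frac1{r\theta-1}\big)$. Let $(P_1,\dots,P_n)$ be a random price sequence with values in $[1,\theta]$ whose maximum $P^*$ has law $F$, and $Y$ a random prediction with law $G$ on $[1,\theta]$ (arbitrary joint law). Then \[ \frac{\mathbb{E}[\mathsf{A}^1_r(P,Y)]}{\mathbb{E}[P^*]}\ \ge\ \frac1{r\theta}-\beta\sup_{\pi\in\Pi(F,G)}\frac{\int z\,|z-y|\,\mathrm{d}\pi(z,y)}{\mathbb{E}[P^*]}, \] where $\Pi(F,G)$ is the set of couplings of $F$ and $G$.
   Context: One-max search: fix $\theta>1$. Prices $p_1,\dots,p_n\in[1,\theta]$ are revealed one at a time; the algorithm receives at the start a prediction $y\in[1,\theta]$ of the maximum price. At each step it irrevocably accepts the current price (payoff = that price) or rejects it; if nothing is accepted the payoff is $1$. Let $\varphi_r(z)=\frac{r\theta-1}{1-r}+\frac{1-r^2\theta}{1-r}\cdot\frac{z}{r\theta}$ and $\Phi^1_r(z)=\max(r\theta,\varphi_r(z))$; $\mathsf{A}^1_r$ accepts the first price $p_i\ge\Phi^1_r(y)$, and $\mathsf{A}^1_r(P,Y)$ is its payoff on the realized prices and prediction. A coupling of $F,G$ is a probability measure on $[1,\theta]^2$ with marginals $F,G$. *)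

From HB Require Import structures.
From mathcomp Require Import all_boot all_order all_algebra.
From mathcomp Require Import all_classical all_reals all_analysis.
Set Implicit Arguments. Unset Strict Implicit. Unset Printing Implicit Defensive.
Import Order.TTheory GRing.Theory Num.Theory.
Local Open Scope classical_set_scope.
Local Open Scope ring_scope.

Section OneMax.
Variable R : realType.

Definition varphi (theta r z : R) : R :=
  (r * theta - 1) / (1 - r) + (1 - r ^+ 2 * theta) / (1 - r) * (z / (r * theta)).

Definition Phi1 (theta r z : R) : R := Num.max (r * theta) (varphi theta r z).

Fixpoint accept_first (thr : R) (s : seq R) : R :=
  if s is p :: s' then (if thr <= p then p else accept_first thr s') else 1.

Definition A1 (theta r : R) (n : nat) (p : 'I_n -> R) (y : R) : R :=
  accept_first (Phi1 theta r y) [seq p i | i <- enum 'I_n].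

(* maximum price (the default 1 is irrelevant when n >= 1 since prices >= 1) *)
Definition maxprice (n : nat) (p : 'I_n -> R) : R := \big[Num.max/1]_(i < n) p i.

Definition couplings d (T : measurableType d) (P : probability T R)
    (X Y : T -> R) : set (probability (R * R)%type R) :=
  [set pi | forall A : set R, measurable A ->
     pi (fst @^-1` A) = P (X @^-1` A) /\ pi (snd @^-1` A) = P (Y @^-1` A)].

End OneMax.

From HB Require Import structures.
From mathcomp Require Import all_boot all_order all_algebra.
From mathcomp Require Import all_classical all_reals all_analysis.
From mathcomp Require Import measurable_realfun ring lra.
Set Implicit Arguments.
Unset Strict Implicit.
Unset Printing Implicit Defensive.

Import Order.TTheory GRing.Theory Num.Theory.
Local Open Scope classical_set_scope.
Local Open Scope ring_scope.

(* Fix an outcome with maximum price z and prediction y.  If the threshold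
   Phi^1_r(y) is reached, A^1_r earns at least varphi_r(y); varphi_r is affine
   with slope (1 - r^2 theta)/((1 - r) r theta) <= 1/(r theta) and meets the line
   z/(r theta) at z = theta, so it loses at most that slope times |z - y| against
   z/(r theta).  Otherwise A^1_r earns 1, which already beats z/(r theta) unless
   r theta < z < varphi_r(y); this forces y > z and an overshoot of at most
   (1 - r^2 theta)/(r theta (r theta - 1)) (y - z).  Hence pointwise
   z/(r theta) - beta z |z - y| <= A^1_r.  Taking expectations, the joint law of
   (P*, Y) is one of the couplings, whose integrals of z |z - y| are bounded by
   theta^2 because couplings live on [1, theta]^2; dividing by E[P*] >= 1 ends
   the proof. *)

Section Prices.
Variable R : realType.
Implicit Types (thr : R) (s : seq R).

Lemma accept_first_ge thr s : has (fun x => thr <= x) s -> thr <= accept_first thr s.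
Proof. by elim: s => [|x s IH] //=; case: ifP => // _; exact: IH. Qed.

Lemma accept_first_default thr s :
  ~~ has (fun x => thr <= x) s -> accept_first thr s = 1.
Proof.
by elim: s => [|x s IH] //=; rewrite negb_or => /andP[/negbTE -> /IH].
Qed.

Lemma accept_first_itv thr b s :
  1 <= b -> all (fun x => 1 <= x <= b) s -> 1 <= accept_first thr s <= b.
Proof.
move=> b1; elim: s => [|x s IH] /=; first by rewrite lexx b1.
by case/andP=> hx /IH; case: ifP.
Qed.

Lemma le_maxprice n (q : 'I_n -> R) i : q i <= maxprice q.
Proof. exact: le_bigmax. Qed.

Lemma maxprice_itv n (q : 'I_n -> R) b :
  1 <= b -> (forall i, 1 <= q i <= b) -> 1 <= maxprice q <= b.
Proof.
move=> b1 hq; apply/andP; split; first by apply/bigmax_geP; left.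
by apply/bigmax_leP; split=> // i _; case/andP: (hq i).
Qed.

Lemma A1_itv (theta r : R) n (q : 'I_n -> R) y :
  1 <= theta -> (forall i, 1 <= q i <= theta) -> 1 <= A1 theta r q y <= theta.
Proof.
move=> theta_ge1 q_itv; apply: accept_first_itv theta_ge1 _.
by apply/allP => _ /mapP[i _ ->]; exact: q_itv.
Qed.

End Prices.

Section Threshold.
Variables (R : realType) (theta r : R).
Hypotheses (r_gt0 : 0 < r) (rtheta_gt1 : 1 < r * theta)
  (r2theta_le1 : r ^+ 2 * theta <= 1).

Local Notation gamma := ((1 - r ^+ 2 * theta) / (r * theta)).
Local Notation beta := (gamma * Num.max (1 - r)^-1 (r * theta - 1)^-1).

Let r_lt1 : r < 1.
Proof.
rewrite ltNge; apply/negP => r_ge1.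
have rtheta_le : r * theta <= r ^+ 2 * theta.
  by rewrite expr2 -mulrA ler_peMl // ltW // (lt_trans ltr01).
by have := lt_le_trans rtheta_gt1 (le_trans rtheta_le r2theta_le1); rewrite ltxx.
Qed.

Let theta_gt0 : 0 < theta.
Proof. by rewrite -(pmulr_rgt0 _ r_gt0) (lt_trans ltr01). Qed.
Let theta_ge1 : 1 <= theta.
Proof. by rewrite ltW // (lt_le_trans rtheta_gt1) // ger_pMl // ltW. Qed.
Let rtheta_gt0 : 0 < r * theta. Proof. exact: lt_trans ltr01 rtheta_gt1. Qed.
Let r_neq0 : r != 0. Proof. exact: lt0r_neq0. Qed.
Let theta_neq0 : theta != 0. Proof. exact: lt0r_neq0. Qed.
Let subr1_neq0 : 1 - r != 0. Proof. by rewrite subr_eq0 eq_sym lt_eqF. Qed.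
Let gamma_ge0 : 0 <= gamma.
Proof. by rewrite divr_ge0 ?subr_ge0 // ltW. Qed.

Lemma beta_ge0 : 0 <= beta.
Proof. by rewrite mulr_ge0 // le_max invr_ge0 subr_ge0 ltW. Qed.

Lemma varphiB z y :
  varphi theta r z - varphi theta r y = gamma / (1 - r) * (z - y).
Proof. by rewrite /varphi; field; rewrite r_neq0 theta_neq0 subr1_neq0. Qed.

Lemma varphi_sub_ratio z :
  varphi theta r z - z / (r * theta) = (r * theta - 1) / ((1 - r) * theta) * (theta - z).
Proof. by rewrite /varphi; field; rewrite r_neq0 theta_neq0 subr1_neq0. Qed.

Let slope_le_penalty (k x z y : R) : 0 <= k <= beta -> x <= `|z - y| -> 1 <= z ->
  k * x <= beta * (z * `|z - y|).
Proof.
case/andP=> k_ge0 k_le x_le z_ge1.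
apply: le_trans (ler_wpM2l k_ge0 x_le) _.
apply: le_trans (ler_wpM2r (normr_ge0 _) k_le) _.
by rewrite ler_wpM2l ?beta_ge0 // ler_peMl.
Qed.

Lemma accepted_payoff_lb z y A : 1 <= z <= theta -> varphi theta r y <= A ->
  z / (r * theta) - beta * (z * `|z - y|) <= A.
Proof.
case/andP=> z_ge1 z_le varphi_le.
have below : z / (r * theta) <= varphi theta r z.
  rewrite -subr_ge0 varphi_sub_ratio mulr_ge0 ?subr_ge0 // divr_ge0 ?subr_ge0 ?ltW //.
  by rewrite mulr_gt0 ?subr_gt0.
have slope : gamma / (1 - r) * (z - y) <= beta * (z * `|z - y|).
  apply: slope_le_penalty => //; last exact: ler_norm.
  by rewrite divr_ge0 ?subr_ge0 ?(ltW r_lt1) //=; apply: ler_wpM2l; rewrite // le_max lexx.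
have := varphiB z y; lra.
Qed.

Lemma rejected_payoff_lb z y : 1 <= z -> z < Phi1 theta r y ->
  z / (r * theta) - beta * (z * `|z - y|) <= 1.
Proof.
move=> z_ge1 z_lt_Phi.
have penalty_ge0 : 0 <= beta * (z * `|z - y|).
  by rewrite mulr_ge0 ?beta_ge0 // mulr_ge0 // (le_trans ler01).
have [z_le|z_gt] := lerP z (r * theta).
  have : z / (r * theta) <= 1 by rewrite ler_pdivrMr // mul1r.
  lra.
have z_lt : z < varphi theta r y.
  by move: z_lt_Phi; rewrite /Phi1 lt_max ltNge (ltW z_gt).
have rtheta1_neq0 : r * theta - 1 != 0 by rewrite subr_eq0 gt_eqF.
have slack : gamma / (r * theta - 1) * (y - z) - (z / (r * theta) - 1) =
           (1 - r) / (r * theta - 1) * (varphi theta r y - z).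
  by rewrite /varphi; field; rewrite rtheta1_neq0 r_neq0 theta_neq0 subr1_neq0.
have slack_ge0 : 0 <= (1 - r) / (r * theta - 1) * (varphi theta r y - z).
  by rewrite !mulr_ge0 ?invr_ge0 ?subr_ge0 ?ltW.
have slope : gamma / (r * theta - 1) * (y - z) <= beta * (z * `|z - y|).
  apply: slope_le_penalty => //; last by rewrite distrC ler_norm.
  rewrite divr_ge0 ?subr_ge0 ?(ltW rtheta_gt1) //=.
  by apply: ler_wpM2l; rewrite // le_max lexx orbT.
lra.
Qed.

Lemma A1_lb n (q : 'I_n -> R) y : (forall i, 1 <= q i <= theta) ->
  (r * theta)^-1 * maxprice q - beta * (maxprice q * `|maxprice q - y|) <=
  A1 theta r q y.
Proof.
move=> q_itv; rewrite mulrC.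
have /andP[z_ge1 z_le] := maxprice_itv theta_ge1 q_itv.
have Phi_gt1 : 1 < Phi1 theta r y by rewrite /Phi1 lt_max rtheta_gt1.
rewrite /A1; have [Phi_le|Phi_gt] := lerP (Phi1 theta r y) (maxprice q).
  apply: accepted_payoff_lb; first by rewrite z_ge1.
  apply: le_trans (accept_first_ge _); first by rewrite /Phi1 le_max lexx orbT.
  case/bigmax_geP: Phi_le => [|[i _ Phi_le]]; first by rewrite leNgt Phi_gt1.
  by apply/hasP; exists (q i); first exact/map_f/mem_enum.
rewrite accept_first_default; first exact: rejected_payoff_lb.
apply/hasPn => _ /mapP[i _ ->]; rewrite -ltNge.
exact: le_lt_trans (le_maxprice q i) Phi_gt.
Qed.

End Threshold.

Section Measurability.
Context d (T : measurableType d) (R : realType).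

Lemma measurable_bigmax (I : Type) (s : seq I) (x0 : R) (F : I -> T -> R) :
  (forall i, measurable_fun setT (F i)) ->
  measurable_fun setT (fun w => \big[Num.max/x0]_(i <- s) F i w).
Proof.
move=> mF; elim: s => [|i s IH].
  by under eq_fun do rewrite big_nil; exact: measurable_cst.
by under eq_fun do rewrite big_cons; exact: measurable_maxr.
Qed.

Lemma measurable_accept_first (I : Type) (s : seq I) (F : I -> T -> R) (thr : T -> R) :
  (forall i, measurable_fun setT (F i)) -> measurable_fun setT thr ->
  measurable_fun setT (fun w => accept_first (thr w) [seq F i w | i <- s]).
Proof.
move=> mF mthr; elim: s => [|i s IH] /=; first exact: measurable_cst.
by apply: measurable_fun_ifT => //; exact: measurable_fun_ler.
Qed.

Lemma measurable_maxprice n (p : 'I_n -> T -> R) :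
  (forall i, measurable_fun setT (p i)) ->
  measurable_fun setT (fun w => maxprice (fun i => p i w)).
Proof. exact: measurable_bigmax. Qed.

Lemma measurable_A1 (theta r : R) n (p : 'I_n -> T -> R) (Y : T -> R) :
  (forall i, measurable_fun setT (p i)) -> measurable_fun setT Y ->
  measurable_fun setT (fun w => A1 theta r (fun i => p i w) (Y w)).
Proof.
move=> mp mY; apply: measurable_accept_first => //.
apply: measurable_maxr; first exact: measurable_cst.
apply: measurable_funD; first exact: measurable_cst.
by apply: measurable_funM; [exact: measurable_cst | apply: measurable_funM].
Qed.

End Measurability.

Section Integration.
Context d (T : measurableType d) (R : realType).

Lemma bounded_integrable (mu : {finite_measure set T -> \bar R}) (f : T -> R) (a b : R) :
  measurable_fun setT f -> (forall w, a <= f w <= b) -> mu.-integrable setT (EFin \o f).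
Proof.
move=> mf f_itv; apply: measurable_bounded_integrable => //; first exact: fin_num_fun_lty.
exists (`|a| + `|b|); split; first by rewrite num_real.
move=> M M_gt w _; apply: le_trans (ltW M_gt); have /andP[a_le le_b] := f_itv w.
have := ler_norm b; have := ler_norm (- a); rewrite normrN => ? ?.
have := normr_ge0 a; have := normr_ge0 b => ? ?.
by rewrite ler_norml; apply/andP; split; lra.
Qed.

Lemma le_Rintegral_combination (mu : measure T R) (f g h : T -> R) (a b : R) :
  mu.-integrable setT (EFin \o f) -> mu.-integrable setT (EFin \o g) ->
  mu.-integrable setT (EFin \o h) -> (forall w, a * f w - b * g w <= h w) ->
  a * Rintegral mu setT f - b * Rintegral mu setT g <= Rintegral mu setT h.
Proof.
move=> if_ ig ih le_h.
have iaf := integrableZl measurableT a if_.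
have ibg := integrableZl measurableT b ig.
rewrite -!RintegralZl // -RintegralB //.
by apply: le_Rintegral => //; exact: (integrableB measurableT iaf ibg).
Qed.

Lemma lb_le_Rintegral (P : probability T R) (f : T -> R) (a b : R) :
  measurable_fun setT f -> (forall w, a <= f w <= b) -> a <= Rintegral P setT f.
Proof.
move=> mf f_itv; have -> : a = Rintegral P setT (cst a).
  by rewrite Rintegral_cst // [X in fine X]probability_setT mulr1.
apply: le_Rintegral => //.
- by apply: (@bounded_integrable P _ a a) => [|w]; [exact: measurable_cst | rewrite lexx].
- exact: bounded_integrable mf f_itv.
- by move=> w _; case/andP: (f_itv w).
Qed.

End Integration.

Section Gap.
Variable R : realType.

Lemma gap_itv (theta x y : R) : 1 <= x <= theta -> 1 <= y <= theta ->
  0 <= x * `|x - y| <= theta * theta.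
Proof.
move=> /andP[x_ge1 x_le] /andP[y_ge1 y_le]; have x_ge0 : 0 <= x := le_trans ler01 x_ge1.
rewrite mulr_ge0 //=; apply: ler_pM => //.
by rewrite ler_norml; apply/andP; split; lra.
Qed.

Lemma measurable_gap : measurable_fun setT (fun z : R * R => z.1 * `|z.1 - z.2|).
Proof.
apply: measurable_funM; first exact: measurable_fst.
apply: measurableT_comp => //.
by apply: measurable_funB; [exact: measurable_fst | exact: measurable_snd].
Qed.

End Gap.

Section Couplings.
Context d (T : measurableType d) (R : realType) (P : probability T R).

Lemma Rintegral_le_sup_couplings (X Y : T -> R) (F : R * R -> R) :
  measurable_fun setT X -> measurable_fun setT Y -> measurable_fun setT F ->
  P.-integrable setT (EFin \o (fun w => F (X w, Y w))) ->
  has_ubound [set Rintegral pi setT F | pi in couplings P X Y] ->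
  Rintegral P setT (fun w => F (X w, Y w)) <=
    sup [set Rintegral pi setT F | pi in couplings P X Y].
Proof.
move=> mX mY mF iF ub; pose XY : {mfun T >-> (R * R)%type} :=
  HB.pack (fun w => (X w, Y w)) (isMeasurableFun.Build _ _ _ _ _ (measurable_fun_pair mX mY)).
apply: (ub_le_sup ub); exists (distribution P XY); first by move=> A mA; split.
by rewrite /Rintegral integral_distribution //; exact/measurable_EFinP.
Qed.

Lemma couplings_Rintegral_ubound (X Y : T -> R) (I : set R) (F : R * R -> R) (M : R) :
  measurable I -> (forall w, I (X w)) -> (forall w, I (Y w)) ->
  measurable_fun setT F -> 0 <= M -> (forall z, I z.1 -> I z.2 -> 0 <= F z <= M) ->
  ubound [set Rintegral pi setT F | pi in couplings P X Y] M.
Proof.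
move=> mI XI YI mF M_ge0 F_itv _ [pi pi_cpl <-].
have mfst : measurable (fst @^-1` I : set (R * R)).
  by rewrite -[X in measurable X]setTI; exact: measurable_fst.
have msnd : measurable (snd @^-1` I : set (R * R)).
  by rewrite -[X in measurable X]setTI; exact: measurable_snd.
pose K := fst @^-1` I `&` snd @^-1` I.
have outside (Z : T -> R) : (forall w, I (Z w)) -> Z @^-1` (~` I) = set0.
  by move=> ZI; apply/seteqP; split=> // w /=; apply.
have [pi_fst pi_snd] := pi_cpl _ (measurableC mI).
rewrite (outside X) // (outside Y) // measure0 in pi_fst pi_snd.
have piK : pi (~` K) = 0%E.
  apply/eqP; rewrite -measure_le0 setCI.
  apply: le_trans (measureU2 _ (measurableC mfst) (measurableC msnd)) _.
  by rewrite [X in (X + _)%E](_ : _ = 0%E) ?[X in (_ + X)%E](_ : _ = 0%E) ?adde0.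
(* F need not be bounded off K, but every coupling is carried by K. *)
pose G z := F z * \1_K z.
have mG : measurable_fun setT G.
  by apply: measurable_funM => //; apply: measurable_indic; exact: measurableI.
have G_itv z : 0 <= G z <= M.
  rewrite /G indicE; case: (boolP (z \in K)) => [/set_mem[]|_]; last by rewrite mulr0 lexx.
  by rewrite mulr1; exact: F_itv.
have -> : Rintegral pi setT F = Rintegral pi setT G.
  rewrite /Rintegral; congr fine; apply: ae_eq_integral => //.
  - exact/measurable_EFinP.
  - exact/measurable_EFinP.
  exists (~` K); split => //; first exact/measurableC/measurableI.
  by move=> z /= FG Kz; apply: FG => _; rewrite /G indicE mem_set // mulr1.
have -> : M = Rintegral pi setT (cst M).
  by rewrite Rintegral_cst // [X in fine X]probability_setT mulr1.
apply: le_Rintegral => //.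
- exact: bounded_integrable mG G_itv.
- by apply: (@bounded_integrable _ _ _ pi _ M M) => //; rewrite lexx.
- by move=> z _; case/andP: (G_itv z).
Qed.

End Couplings.

Section GapIntegral.
Context d (T : measurableType d) (R : realType) (P : probability T R).
Variables (theta : R) (X Y : T -> R).
Hypotheses (mX : measurable_fun setT X) (mY : measurable_fun setT Y).
Hypotheses (X_itv : forall w, 1 <= X w <= theta) (Y_itv : forall w, 1 <= Y w <= theta).

Lemma integrable_gap : P.-integrable setT (EFin \o (fun w => X w * `|X w - Y w|)).
Proof.
apply: (@bounded_integrable _ _ _ P _ 0 (theta * theta)) => [|w]; last exact: gap_itv.
exact: measurableT_comp (@measurable_gap R) (measurable_fun_pair mX mY).
Qed.

Lemma Rintegral_gap_le_sup_couplings :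
  Rintegral P setT (fun w => X w * `|X w - Y w|) <=
    sup [set Rintegral pi setT (fun z : R * R => z.1 * `|z.1 - z.2|)
        | pi in couplings P X Y].
Proof.
pose I : set R := [set` `[1, theta]].
have I_itv x : I x = (1 <= x <= theta) by rewrite /I /= in_itv.
apply: Rintegral_le_sup_couplings => //; [exact: measurable_gap | exact: integrable_gap |].
exists (theta * theta); apply: (couplings_Rintegral_ubound (I := I)) => //.
- exact: measurable_itv.
- exact: measurable_gap.
- have /andP[X_ge1 X_le] := X_itv point.
  by rewrite mulr_ge0 // (le_trans ler01) // (le_trans X_ge1).
- by move=> z; rewrite !I_itv; exact: gap_itv.
Qed.

End GapIntegral.

Lemma Rintegral_A1_lb d (T : measurableType d) (R : realType) (P : probability T R)
    (theta r : R) n (p : 'I_n -> T -> R) (Y : T -> R) :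
  0 < r -> 1 < r * theta -> r ^+ 2 * theta <= 1 ->
  (forall i, measurable_fun setT (p i)) -> measurable_fun setT Y ->
  (forall i w, 1 <= p i w <= theta) -> (forall w, 1 <= Y w <= theta) ->
  let Pstar := fun w => maxprice (fun i => p i w) in
  (r * theta)^-1 * Rintegral P setT Pstar -
    (1 - r ^+ 2 * theta) / (r * theta) * Num.max (1 - r)^-1 (r * theta - 1)^-1 *
    Rintegral P setT (fun w => Pstar w * `|Pstar w - Y w|) <=
  Rintegral P setT (fun w => A1 theta r (fun i => p i w) (Y w)).
Proof.
move=> r_gt0 rtheta_gt1 r2theta_le1 mp mY p_itv Y_itv; cbv zeta.
set Pstar := fun w => maxprice _.
have /andP[Y_ge1 Y_le] := Y_itv point.
have theta_ge1 := le_trans Y_ge1 Y_le.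
have mPstar : measurable_fun setT Pstar := measurable_maxprice mp.
have Pstar_itv w : 1 <= Pstar w <= theta := maxprice_itv theta_ge1 (p_itv^~ w).
apply: le_Rintegral_combination => [||| w]; last exact: A1_lb.
- exact: bounded_integrable mPstar Pstar_itv.
- exact: integrable_gap mPstar mY Pstar_itv Y_itv.
- apply: bounded_integrable (measurable_A1 _ _ mp mY) _ => w.
  apply: A1_itv => // i; exact: p_itv.
Qed.

Lemma threshold_range (R : realType) (theta r : R) :
  1 < theta -> theta^-1 < r -> r <= Num.sqrt theta^-1 ->
  [/\ 0 < r, 1 < r * theta & r ^+ 2 * theta <= 1].
Proof.
move=> theta_gt1 r_gt r_le; have theta_gt0 : 0 < theta := lt_trans ltr01 theta_gt1.
have r_gt0 : 0 < r by apply: lt_trans r_gt; rewrite invr_gt0.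
split=> //; first by move: r_gt; rewrite -[theta^-1]mul1r ltr_pdivrMr.
have : r ^+ 2 <= theta^-1.
  have := ler_pM (ltW r_gt0) (ltW r_gt0) r_le r_le.
  by rewrite -expr2 -[_ * _]expr2 sqr_sqrtr // invr_ge0 ltW.
by rewrite -[theta^-1]mul1r ler_pdivlMr.
Qed.

Theorem corollary9 (R : realType) (theta r : R) (n : nat)
  (d : measure_display) (T : measurableType d) (P : probability T R)
  (p : 'I_n -> T -> R) (Y : T -> R) :
  1 < theta ->
  theta^-1 < r -> r <= Num.sqrt (theta^-1) ->
  (forall i, measurable_fun setT (p i)) ->
  measurable_fun setT Y ->
  (forall i w, 1 <= p i w <= theta) ->
  (forall w, 1 <= Y w <= theta) ->
  let beta := (1 - r ^+ 2 * theta) / (r * theta) *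
              Num.max (1 - r)^-1 (r * theta - 1)^-1 in
  let Pstar := fun w => maxprice (fun i => p i w) in
  let EP := Rintegral P setT Pstar in
  Rintegral P setT (fun w => A1 theta r (fun i => p i w) (Y w)) / EP >=
    (r * theta)^-1 -
    beta * sup [set Rintegral pi setT (fun z : R * R => z.1 * `|z.1 - z.2|)
               | pi in couplings P Pstar Y] / EP.
Proof.
move=> theta_gt1 r_gt r_le mp mY p_itv Y_itv; cbv zeta.
have [r_gt0 rtheta_gt1 r2theta_le1] := threshold_range theta_gt1 r_gt r_le.
have mPstar := measurable_maxprice mp.
have Pstar_itv w := maxprice_itv (ltW theta_gt1) (p_itv^~ w).
have payoff := Rintegral_A1_lb P r_gt0 rtheta_gt1 r2theta_le1 mp mY p_itv Y_itv.
cbv zeta in payoff.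
have sup_ge := Rintegral_gap_le_sup_couplings P mPstar mY Pstar_itv Y_itv.
have EP_gt0 := lt_le_trans ltr01 (lb_le_Rintegral P mPstar Pstar_itv).
have beta_ge0 := beta_ge0 rtheta_gt1 r2theta_le1.
rewrite ler_pdivlMr // mulrBl divfK ?gt_eqF //.
have := ler_wpM2l beta_ge0 sup_ge; lra.
Qed.
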